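(* Let $G$ be a finite simple connected graph and $H=C(G)$ its cone, obtained by adding a new vertex $w$ and joining every vertex of $G$ to $w$; work in $R=K[x_j: j\in V(H)]$. (i) If $(x_i: i\in V(G))\in\mathrm{Ass}(R/J(G)^t)$ for some $t\ge1$, then $(x_j: j\in V(H))\in\mathrm{Ass}(R/J(H)^{t+1})$. (ii) If $(x_i: i\in V(G))\in\mathrm{Ass}(R/I(G)^t)$ for some $t\geq2$, then $(x_j: j\in V(H))\in\mathrm{Ass}(R/I(H)^t)$.
   Context: For a graph $G$ with vertices indexing variables, the edge ideal is $I(G)=(x_ix_j:\{i,j\}\in E(G))$ and the cover ideal is $J(G)=\bigcap_{\{i,j\}\in E(G)}(x_i,x_j)$ (the Alexander dual of $I(G)$). $K$ is a field. *)

From HB Require Import structures.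
From mathcomp Require Import all_boot all_order all_algebra.
From mathcomp Require Import mpoly.
Set Implicit Arguments. Unset Strict Implicit. Unset Printing Implicit Defensive.
Import GRing.Theory.
Local Open Scope ring_scope.

Section Defs.
Variables (K : fieldType) (N : nat).
Local Notation R := {mpoly K[N]}.

Definition ideal_gen (S : R -> Prop) : R -> Prop :=
  fun p => exists rs : seq (R * R),
    (forall x, x \in rs -> S x.2) /\ p = \sum_(x <- rs) x.1 * x.2.

Definition var_ideal (A : pred 'I_N) : R -> Prop :=
  ideal_gen (fun p => exists2 i, A i & p = 'X_i).

Definition ideal_pow (I : R -> Prop) (t : nat) : R -> Prop :=
  ideal_gen (fun p => exists s : seq R,
    [/\ size s = t, forall q, q \in s -> I q & p = \prod_(q <- s) q]).

Definition edge_ideal (e : rel 'I_N) : R -> Prop :=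
  ideal_gen (fun p => exists i j, e i j /\ p = 'X_i * 'X_j).

Definition cover_ideal (e : rel 'I_N) : R -> Prop :=
  fun p => forall i j, e i j -> var_ideal (fun k => (k == i) || (k == j)) p.

Definition is_prime_ideal (P : R -> Prop) : Prop :=
  [/\ P 0, (forall a b, P a -> P b -> P (a + b)),
      (forall a b, P b -> P (a * b)),
      (exists g, ~ P g) &
      (forall a b, P (a * b) -> P a \/ P b)].

(* P \in Ass(R/I): P is prime and P = (I : f) for some f in R *)
Definition is_assoc (I P : R -> Prop) : Prop :=
  is_prime_ideal P /\ exists f : R, forall g, P g <-> I (g * f).
End Defs.

Definition simple_graph n (e : rel 'I_n) : Prop := (forall i j, e i j = e j i) /\ (forall i, e i i = false).
Definition connected_graph n (e : rel 'I_n) : Prop := forall i j, connect e i j.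

(* vertices of G are embedded in V(H) = 'I_n.+1 via widen; w = ord_max *)
Definition vG n (i : 'I_n) : 'I_n.+1 := widen_ord (leqnSn n) i.

Definition liftG n (e : rel 'I_n) : rel 'I_n.+1 :=
  fun a b => [exists i : 'I_n, exists j : 'I_n,
                 [&& a == vG i, b == vG j & e i j]].

Definition cone n (e : rel 'I_n) : rel 'I_n.+1 :=
  fun a b => liftG e a b ||
             ((a != b) && ((a == ord_max) || (b == ord_max))).

Definition oldV n : pred 'I_n.+1 := fun a => a != ord_max.

From HB Require Import structures.
From mathcomp Require Import all_boot all_order all_algebra.
From mathcomp Require Import mpoly.
From mathcomp Require Import zify.
From Stdlib Require Import Classical.
Set Implicit Arguments. Unset Strict Implicit. Unset Printing Implicit Defensive.
Import GRing.Theory.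
Local Open Scope ring_scope.

(* All ideals involved are monomial. If (x_i : i in A) is associated to R/I then some
   monomial X^m lies outside I while x_i X^m lies in I for every i in A, and when A
   contains all variables this converse holds too. For G such an m can be chosen free
   of the cone variable w.
   For J, the monomial x_w^t (prod_{i in V(G)} x_i) X^m works for H and t+1: x_j times
   it factors through t covers of G extended by w and the cover V(H) \ {j} (or
   V(H) \ {v}, v in V(G), when j = w); and among t+1 covers of H dividing it one avoids
   w, so it contains V(G) and the others restrict to t covers of G dividing X^m.
   For I, X^m itself works: in a factorisation of x_v X^m some edge passes through v,
   and turning it into an edge through w factors x_w X^m in H. *)

Section MonomialIdeals.
Variables (K : fieldType) (N : nat).
Local Notation R := {mpoly K[N]}.
Local Notation mnm := 'X_{1..N}.
Implicit Types (S I : R -> Prop) (M : mnm -> Prop) (p q : R) (m u : mnm).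

Lemma ideal_gen0 S : ideal_gen S 0.
Proof. by exists [::]; rewrite big_nil. Qed.

Lemma ideal_genD S p q : ideal_gen S p -> ideal_gen S q -> ideal_gen S (p + q).
Proof.
case=> [rs [Srs ->]] [ss [Sss ->]]; exists (rs ++ ss); split; last by rewrite big_cat.
by move=> x; rewrite mem_cat => /orP[/Srs|/Sss].
Qed.

Lemma ideal_genMl S r q : ideal_gen S q -> ideal_gen S (r * q).
Proof.
case=> [rs [Srs ->]]; exists [seq (r * x.1, x.2) | x <- rs]; split.
  by move=> x /mapP [y /Srs ? ->].
by rewrite big_map mulr_sumr; apply: eq_bigr => x _; rewrite mulrA.
Qed.

Lemma mem_ideal_gen S p : S p -> ideal_gen S p.
Proof.
by move=> Sp; exists [:: (1, p)]; rewrite big_seq1 mul1r; split=> // x /[1!inE] /eqP ->.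
Qed.

Lemma ideal_gen_sum S (T : eqType) (r : seq T) (F : T -> R) :
  (forall x, x \in r -> ideal_gen S (F x)) -> ideal_gen S (\sum_(x <- r) F x).
Proof.
elim: r => [|a r IHr] SF; first by rewrite big_nil; apply: ideal_gen0.
rewrite big_cons; apply: ideal_genD; first by apply: SF; rewrite mem_head.
by apply: IHr => x rx; apply: SF; rewrite inE rx orbT.
Qed.

Definition upward_closed M := forall m m', M m -> (m <= m')%MM -> M m'.

Definition monomial_ideal I M := forall p, I p <-> {in msupp p, forall m, M m}.

Lemma monomial_idealX I M u : monomial_ideal I M -> I 'X_[u] <-> M u.
Proof.
move=> IM; rewrite IM msuppX; split => [/(_ u (mem_head _ _)) //|Mu m].
by rewrite inE => /eqP ->.
Qed.

Lemma ideal_gen_monomial S M : upward_closed M ->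
  (forall u, M u -> exists2 u0, S 'X_[u0] & (u0 <= u)%MM) ->
  (forall q, S q -> {in msupp q, forall m, M m}) ->
  monomial_ideal (ideal_gen S) M.
Proof.
move=> upM genM suppS p; split.
  case=> rs [Srs ->] m /msupp_sum_le /flattenP [s /mapP [x rx ->]].
  move=> /msuppM_le /allpairsP [[m1 m2] /= [_ m2x ->]].
  rewrite filter_predT in rx; apply: (upM m2); first exact: suppS (Srs _ rx) _ m2x.
  exact: lem_addl.
move=> suppM; rewrite [p]mpolyE; apply: ideal_gen_sum => m /suppM /genM [u0 Su0 le_u0m].
rewrite -mul_mpolyC -(submK le_u0m) mpolyXD mulrA.
exact/ideal_genMl/mem_ideal_gen.
Qed.

Definition exps_pow M t m := exists us : seq mnm,
  [/\ size us = t, {in us, forall u, M u} & (\sum_(u <- us) u <= m)%MM].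

Lemma exps_pow_upward_closed M t : upward_closed (exps_pow M t).
Proof.
by move=> m m' [us [? ? le_usm]] le_mm'; exists us; split=> //; exact: lepm_trans le_mm'.
Qed.

Lemma exps_pow_mono M M' t m :
  (forall u, M u -> M' u) -> exps_pow M t m -> exps_pow M' t m.
Proof. by move=> MM' [us [? Mus ?]]; exists us; split=> // u /Mus /MM'. Qed.

Lemma ideal_pow_monomial I M t :
  monomial_ideal I M -> monomial_ideal (ideal_pow I t) (exps_pow M t).
Proof.
move=> IM; apply: ideal_gen_monomial; first exact: exps_pow_upward_closed.
  move=> m [us [size_us Mus le_usm]]; exists (\sum_(u <- us) u)%MM => //.
  exists [seq 'X_[u] | u <- us]; split; first by rewrite size_map.
    by move=> q /mapP [u /Mus Mu ->]; apply/(monomial_idealX _ IM).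
  by rewrite big_map mpolyX_prod.
move=> _ [s [<- Is ->]]; elim: s Is => [|a s IHs] Is m.
  rewrite big_nil msupp1 inE => /eqP ->; exists [::]; split => //.
  by rewrite big_nil lepm_refl.
rewrite big_cons => /msuppM_le /allpairsP [[m1 m2] /= [m1a m2s ->]].
have [|us [size_us Mus le_usm2]] := IHs _ _ m2s.
  by move=> q qs; apply: Is; rewrite inE qs orbT.
exists (m1 :: us); split; first by rewrite /= size_us.
  move=> u /[1!inE] /orP [/eqP -> | /Mus //].
  by move/IM: (Is a (mem_head _ _)); apply.
rewrite big_cons; apply/mnm_lepP => i; rewrite !mnmDE leq_add2l; exact/mnm_lepP.
Qed.

Definition mnm_meets (A : pred 'I_N) m := exists2 i, A i & (0 < m i)%N.
Definition mnm_covers (e : rel 'I_N) m :=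
  forall i j, e i j -> (0 < m i)%N \/ (0 < m j)%N.
Definition mnm_has_edge (e : rel 'I_N) m :=
  exists i j, e i j /\ (U_(i) + U_(j) <= m)%MM.

Lemma var_ideal_monomial A : monomial_ideal (var_ideal A) (mnm_meets A).
Proof.
apply: ideal_gen_monomial.
- by move=> m m' [i Ai mi] /mnm_lepP le_mm'; exists i => //; exact: leq_trans (le_mm' i).
- by move=> u [i Ai ui]; exists U_(i)%MM; [exists i | rewrite lep1mP -lt0n].
- move=> _ [i Ai ->] m; rewrite msuppX inE => /eqP ->.
  by exists i; rewrite // mnm1E eqxx.
Qed.

Lemma cover_ideal_monomial e : monomial_ideal (cover_ideal e) (mnm_covers e).
Proof.
move=> p; split=> [cov_p m mp i j eij | cov_p i j eij].
  have [k /orP[] /eqP -> mk] := (var_ideal_monomial _ _).1 (cov_p i j eij) m mp.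
  - by left.
  - by right.
apply/var_ideal_monomial => m /cov_p /(_ i j eij) [mi|mj].
- by exists i; rewrite ?eqxx.
- by exists j; rewrite ?eqxx ?orbT.
Qed.

Lemma edge_ideal_monomial e : monomial_ideal (edge_ideal e) (mnm_has_edge e).
Proof.
apply: ideal_gen_monomial.
- by move=> m m' [i [j [eij le_m]]] le_mm'; exists i, j; split=> //; exact: lepm_trans le_mm'.
- by move=> u [i [j [eij le_u]]]; exists (U_(i) + U_(j))%MM => //; exists i, j; rewrite mpolyXD.
- move=> _ [i [j [eij ->]]] m; rewrite -mpolyXD msuppX inE => /eqP ->.
  by exists i, j; rewrite lepm_refl.
Qed.

Lemma mnm_neq0 m : m != 0%MM <-> exists i, (0 < m i)%N.
Proof.
split=> [nz_m | [i mi]]; last by apply: contraTneq mi => ->; rewrite mnm0E.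
apply: NNPP => no_i; case/eqP: nz_m; apply/mnmP => i; rewrite mnm0E.
by apply/eqP; rewrite -leqn0 leqNgt; apply/negP => mi; apply: no_i; exists i.
Qed.

Lemma var_idealT_coef0 p : var_ideal predT p <-> p@_0 = 0.
Proof.
rewrite var_ideal_monomial; split=> [suppT | p0].
  apply/eqP; rewrite mcoeff_eq0; apply/negP => /suppT [i _ mi].
  by rewrite mnm0E in mi.
move=> m mp; have /mnm_neq0 [i mi] : m != 0%MM.
  by apply: contraTneq mp => ->; rewrite mcoeff_msupp p0 eqxx.
by exists i.
Qed.

Lemma var_idealT_prime : is_prime_ideal (var_ideal (K := K) (N := N) predT).
Proof.
have coef0M (a b : R) : (a * b)@_0 = a@_0 * b@_0.
  exact: (@mcoeff0_is_multiplicative N K).1.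
split.
- by apply/var_idealT_coef0; rewrite mcoeff0.
- move=> a b /var_idealT_coef0 a0 /var_idealT_coef0 b0.
  by apply/var_idealT_coef0; rewrite mcoeffD a0 b0 addr0.
- by move=> a b /var_idealT_coef0 b0; apply/var_idealT_coef0; rewrite coef0M b0 mulr0.
- by exists 1 => /var_idealT_coef0 /eqP; rewrite mcoeff1 eqxx oner_eq0.
- move=> a b /var_idealT_coef0 /eqP; rewrite coef0M mulf_eq0.
  by case/orP => /eqP ?; [left|right]; apply/var_idealT_coef0.
Qed.

Lemma assoc_var_ideal_witness I M A : monomial_ideal I M ->
  is_assoc I (var_ideal A) -> exists m, ~ M m /\ forall i, A i -> M (U_(i) + m)%MM.
Proof.
move=> IM [[_ _ PM [g Pg] _] [f colon_f]].
have P1 : ~ var_ideal A (1 : R) by move=> P1; apply: Pg; rewrite -[g]mulr1; apply: PM.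
have [m [mf Mm]] : exists m, m \in msupp f /\ ~ M m.
  apply: NNPP => all_M; apply: P1; apply/colon_f; rewrite mul1r; apply/IM => m mf.
  by apply: NNPP => Mm; apply: all_M; exists m.
exists m; split=> // i Ai.
have /colon_f : var_ideal A ('X_i : R) by apply: mem_ideal_gen; exists i.
rewrite mulrC => /IM; apply; by rewrite mcoeff_msupp mcoeffMX -mcoeff_msupp.
Qed.

Lemma witness_assoc_var_idealT I M m : upward_closed M -> monomial_ideal I M ->
  ~ M m -> (forall i, M (U_(i) + m)%MM) -> is_assoc I (var_ideal predT).
Proof.
move=> upM IM Mm Mim; split; first exact: var_idealT_prime.
exists 'X_[m] => g; split => [/var_idealT_coef0 g0 | /IM Igm].
  apply/IM => m'; rewrite (perm_mem (msuppMX g m)) => /mapP [m1 m1g ->].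
  have /mnm_neq0 [i m1i] : m1 != 0%MM.
    by apply: contraTneq m1g => ->; rewrite mcoeff_msupp g0 eqxx.
  apply: (upM _ _ (Mim i)); apply/mnm_lepP => k; rewrite !mnmDE mnm1E addnC leq_add2l.
  by case: eqP => // <-.
apply/var_idealT_coef0; apply: NNPP => g0; apply: Mm; apply: Igm.
by rewrite mcoeff_msupp -[X in _@_X]addm0 mcoeffMX; apply/eqP.
Qed.
End MonomialIdeals.

Local Close Scope ring_scope.

Section Cone.
Variables (n : nat) (e : rel 'I_n).
Hypothesis e_simple : simple_graph e.
Local Notation w := (@ord_max n).
Local Notation mnm := 'X_{1..n.+1}.
Implicit Types (a b v : 'I_n.+1) (m u : mnm) (M : mnm -> Prop).

Lemma vG_neq_max (i : 'I_n) : vG i != w.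
Proof. by rewrite -val_eqE /= neq_ltn ltn_ord. Qed.

Lemma liftG_old a b : liftG e a b -> [/\ a != w, b != w & a != b].
Proof.
case/existsP => i /existsP [j /and3P [/eqP -> /eqP -> eij]].
split; try exact: vG_neq_max.
apply: contraTneq eij => /(congr1 val) /= /val_inj ij; subst j.
by case: e_simple => _ ->.
Qed.

Lemma liftG_sym a b : liftG e a b = liftG e b a.
Proof.
by apply/idP/idP => /existsP [i /existsP [j /and3P [/eqP -> /eqP -> eij]]];
  apply/existsP; exists j; apply/existsP; exists i; rewrite !eqxx /=;
  case: e_simple => <- _.
Qed.

Lemma liftG_cone a b : liftG e a b -> cone e a b.
Proof. by rewrite /cone => ->. Qed.

Lemma cone_neq a b : cone e a b -> a != b.
Proof. by case/orP => [/liftG_old [] | /andP []]. Qed.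

Lemma cone_liftG a b : cone e a b -> a != w -> b != w -> liftG e a b.
Proof. by case/orP => [// | /andP [_ /orP [] /eqP ->]]; rewrite eqxx. Qed.

Lemma cone_max a : a != w -> cone e a w.
Proof. by move=> aw; rewrite /cone aw eqxx orbT orbT. Qed.

Definition drop_max u : mnm := [multinom if i == w then 0%N else u i | i < n.+1].

Lemma exps_pow_drop_max M t m : (forall u, M u -> M (drop_max u)) ->
  exps_pow M t m -> exps_pow M t (drop_max m).
Proof.
move=> M_drop [us [size_us Mus /mnm_lepP le_usm]]; exists (map drop_max us); split.
- by rewrite size_map.
- by move=> _ /mapP [u /Mus /M_drop Mu ->].
apply/mnm_lepP => k; rewrite mnm_sumE big_map mnmE; case: eqP => [kw | _].
  by rewrite big1 // => u _; rewrite mnmE kw eqxx.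
by apply: leq_trans (le_usm k); rewrite mnm_sumE leq_sum // => u _; rewrite mnmE; case: eqP.
Qed.

Lemma drop_max_max u : drop_max u w = 0%N.
Proof. by rewrite mnmE eqxx. Qed.

Lemma exps_pow_witness_drop_max M t m : (forall u, M u -> M (drop_max u)) ->
  ~ exps_pow M t m -> (forall i, oldV i -> exps_pow M t (U_(i) + m)%MM) ->
  ~ exps_pow M t (drop_max m) /\ forall i, oldV i -> exps_pow M t (U_(i) + drop_max m)%MM.
Proof.
move=> M_drop Mm Mim; split=> [Mdm | i old_i].
  by apply/Mm/(exps_pow_upward_closed Mdm)/mnm_lepP => k; rewrite mnmE; case: eqP.
suff -> : (U_(i) + drop_max m)%MM = drop_max (U_(i) + m) by exact/exps_pow_drop_max/Mim.
by apply/mnmP => k; rewrite !mnmE; case: (k =P w) => // ->; rewrite (negbTE old_i).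
Qed.

Lemma covers_drop_max u : mnm_covers (liftG e) u -> mnm_covers (liftG e) (drop_max u).
Proof.
move=> cov_u a b /[dup] /liftG_old [aw bw _] /cov_u.
by rewrite !mnmE (negbTE aw) (negbTE bw).
Qed.

Lemma has_edge_drop_max u : mnm_has_edge (liftG e) u -> mnm_has_edge (liftG e) (drop_max u).
Proof.
case=> i [j [eij /mnm_lepP le_u]]; have [iw jw _] := liftG_old eij.
exists i, j; split => //; apply/mnm_lepP => k; have := le_u k.
rewrite mnmDE !mnm1E mnmE; case: (k =P w) => // ->.
by rewrite (negbTE iw) (negbTE jw).
Qed.

Definition all_but v : mnm := [multinom (i != v : nat) | i < n.+1].

Lemma all_butK a b : (all_but a + U_(a) = all_but b + U_(b))%MM.
Proof.
by apply/mnmP => k; rewrite !mnmDE !mnmE ![k == _]eq_sym; case: (a == k); case: (b == k).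
Qed.

Lemma covers_all_but v : mnm_covers (cone e) (all_but v).
Proof.
move=> a b /cone_neq ab; rewrite !mnmE.
by have [av|] := eqVneq a v; [right; rewrite -av eq_sym ab | left].
Qed.

Lemma covers_cone_add_max u :
  mnm_covers (liftG e) u -> mnm_covers (cone e) (u + U_(w))%MM.
Proof.
move=> cov_u a b ab; rewrite !mnmDE !mnm1E.
have [->|aw] := eqVneq a w; first by left; rewrite addn_gt0 orbT.
have [->|bw] := eqVneq b w; first by right; rewrite addn_gt0 orbT.
rewrite !addn0.
exact: cov_u (cone_liftG ab aw bw).
Qed.

Lemma covers_cone_max0 u a : mnm_covers (cone e) u -> u w = 0%N -> a != w -> (0 < u a)%N.
Proof. by move=> cov_u uw0 aw; case: (cov_u a w (cone_max aw)); rewrite ?uw0. Qed.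

Definition cone_cover_witness t m : mnm :=
  [multinom (m i + (i != w) + (i == w) * t)%N | i < n.+1].

Lemma exps_pow_cone_cover t m x v j : (all_but x + U_(v) = all_but w + U_(j))%MM ->
  exps_pow (mnm_covers (liftG e)) t (U_(v) + m)%MM ->
  exps_pow (mnm_covers (cone e)) t.+1 (U_(j) + cone_cover_witness t m)%MM.
Proof.
move=> /mnmP ones [us [size_us cov_us /mnm_lepP le_us]].
exists (all_but x :: [seq (u + U_(w))%MM | u <- us]); split.
- by rewrite /= size_map size_us.
- move=> _ /[1!inE] /orP [/eqP -> | /mapP [u /cov_us cov_u ->]].
  + exact: covers_all_but.
  + exact: covers_cone_add_max.
apply/mnm_lepP => k; move: (ones k) (le_us k).
rewrite !mnmDE !mnmE !mnm_sumE big_cons big_map /= => ones_k le_k.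
under eq_bigr do rewrite mnmDE mnmE.
rewrite big_split big_const_seq count_predT iter_addn_0 size_us /= mnmE [w == k]eq_sym.
lia.
Qed.

Lemma cone_cover_witness_mulX t m v : v != w ->
  (forall i, oldV i -> exps_pow (mnm_covers (liftG e)) t (U_(i) + m)%MM) ->
  forall j, exps_pow (mnm_covers (cone e)) t.+1 (U_(j) + cone_cover_witness t m)%MM.
Proof.
move=> vw Mim j; have [-> | jw] := eqVneq j w.
- exact: exps_pow_cone_cover (all_butK v w) (Mim v vw).
- exact: exps_pow_cone_cover (erefl _) (Mim j jw).
Qed.

(* The cone variable has degree [t] only, so one of the [t+1] covers avoids [w];
   it then contains every old vertex, and the remaining [t] covers restrict to [G]. *)
Lemma cone_cover_witness_notin t m : m w = 0%N ->
  ~ exps_pow (mnm_covers (liftG e)) t m ->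
  ~ exps_pow (mnm_covers (cone e)) t.+1 (cone_cover_witness t m).
Proof.
move=> mw0 Mm [us [size_us cov_us /mnm_lepP le_us]].
have [u uus uw0] : exists2 u, u \in us & u w = 0%N.
  apply: NNPP => no_u; have := le_us w; rewrite mnm_sumE mnmE mw0 eqxx /=.
  suff : (size us <= \sum_(u <- us) u w)%N by rewrite size_us; lia.
  rewrite -sum1_size big_seq [leqRHS]big_seq; apply: leq_sum => u uus.
  by rewrite lt0n; apply/eqP => uw0; apply: no_u; exists u.
apply: Mm; exists (map drop_max (rem u us)); split.
- by rewrite size_map size_rem // size_us.
- move=> _ /mapP [u' /mem_rem /cov_us cov_u' ->].
  by apply: covers_drop_max => a b /liftG_cone; apply: cov_u'.
apply/mnm_lepP => k; rewrite mnm_sumE big_map; case: (k =P w) => [kw | /eqP kw].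
  by rewrite big1 // => ? _; rewrite mnmE kw eqxx.
have := le_us k; rewrite mnm_sumE (big_rem _ uus) mnmE /= (negbTE kw).
have := covers_cone_max0 (cov_us u uus) uw0 kw.
under [X in _ -> _ -> (X <= _)%N]eq_bigr do rewrite mnmE (negbTE kw).
lia.
Qed.

Lemma has_edge_cone_shift_end i j u : liftG e i j -> (U_(i) + U_(j) <= u)%MM ->
  mnm_has_edge (cone e) (u - U_(i) + U_(w))%MM.
Proof.
move=> eij /mnm_lepP le_u; have [iw jw ij] := liftG_old eij.
exists j, w; split; first exact: cone_max.
apply/mnm_lepP => k; have := le_u k; rewrite !mnmDE !mnmBE !mnm1E.
by have [<-|] := eqVneq j k; [rewrite (negbTE ij) eq_sym (negbTE jw) | case: (i == k)]; lia.
Qed.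

Lemma has_edge_cone_shift v u : mnm_has_edge (liftG e) u ->
  mnm_has_edge (cone e) (u - U_(v) + U_(w))%MM.
Proof.
case=> i [j [eij le_u]].
have [-> | vi] := eqVneq v i; first exact: has_edge_cone_shift_end eij le_u.
have [-> | vj] := eqVneq v j.
  by apply: (has_edge_cone_shift_end (j := i)); rewrite 1?liftG_sym 1?addmC.
exists i, j; split; first exact: liftG_cone.
apply/mnm_lepP => k; move/mnm_lepP: le_u => /(_ k); rewrite !mnmDE !mnmBE !mnm1E.
by have [<-|] := eqVneq v k; [rewrite ![_ == v]eq_sym (negbTE vi) (negbTE vj) | ]; lia.
Qed.

Lemma has_edge_cone_max0 u : mnm_has_edge (cone e) u -> u w = 0%N ->
  mnm_has_edge (liftG e) u.
Proof.
case=> i [j [eij /mnm_lepP le_u]] uw0; exists i, j; split; last exact/mnm_lepP.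
have := le_u w; rewrite mnmDE !mnm1E uw0 leqn0 addn_eq0 !eqb0 => /andP [iw jw].
exact: cone_liftG eij iw jw.
Qed.

Lemma has_edge_liftG_cone u : mnm_has_edge (liftG e) u -> mnm_has_edge (cone e) u.
Proof. by case=> i [j [eij le_u]]; exists i, j; split; first exact: liftG_cone. Qed.

(* Some edge of a factorisation of [x_v X^m] uses [x_v], since [X^m] is not in the power;
   moving that edge end from [v] to [w] factors [x_w X^m] in the cone. *)
Lemma exps_pow_edge_shift t m v : ~ exps_pow (mnm_has_edge (liftG e)) t m ->
  exps_pow (mnm_has_edge (liftG e)) t (U_(v) + m)%MM ->
  exps_pow (mnm_has_edge (cone e)) t (U_(w) + m)%MM.
Proof.
move=> Mm [us [size_us edge_us /mnm_lepP le_us]].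
have [u uus uv] : exists2 u, u \in us & (0 < u v)%N.
  apply: NNPP => no_u; apply: Mm; exists us; split => //; apply/mnm_lepP => k.
  have := le_us k; rewrite !mnm_sumE mnmDE mnm1E; have [<- _|_] := eqVneq v k; last by [].
  rewrite big_seq big1 // => u uus; apply/eqP; rewrite -leqn0 leqNgt.
  by apply/negP => uv; apply: no_u; exists u.
exists ((u - U_(v) + U_(w))%MM :: rem u us); split.
- by rewrite /= size_rem // prednK // lt0n size_eq0; apply: contraTneq uus => ->.
- move=> x /[1!inE] /orP [/eqP -> | /mem_rem xus]; first exact/has_edge_cone_shift/edge_us.
  exact/has_edge_liftG_cone/edge_us.
apply/mnm_lepP => k; have := le_us k; rewrite !mnm_sumE big_cons (big_rem _ uus) /=.
rewrite !mnmDE !mnmBE !mnm1E.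
by have [<-|] := eqVneq v k; lia.
Qed.

Lemma cone_edge_witness_mulX t m v : v != w ->
  ~ exps_pow (mnm_has_edge (liftG e)) t m ->
  (forall i, oldV i -> exps_pow (mnm_has_edge (liftG e)) t (U_(i) + m)%MM) ->
  forall j, exps_pow (mnm_has_edge (cone e)) t (U_(j) + m)%MM.
Proof.
move=> vw Mm Mim j; have [-> | jw] := eqVneq j w.
- exact: exps_pow_edge_shift Mm (Mim v vw).
- exact: exps_pow_mono has_edge_liftG_cone (Mim j jw).
Qed.

Lemma cone_edge_witness_notin t m : m w = 0%N ->
  ~ exps_pow (mnm_has_edge (liftG e)) t m -> ~ exps_pow (mnm_has_edge (cone e)) t m.
Proof.
move=> mw0 Mm [us [size_us edge_us le_us]]; apply: Mm; exists us; split => // u uus.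
apply: has_edge_cone_max0 (edge_us u uus) _; apply/eqP; rewrite -leqn0 -mw0.
move/mnm_lepP: le_us => /(_ w); apply: leq_trans.
by rewrite mnm_sumE (big_rem _ uus) leq_addr.
Qed.
End Cone.

Theorem lemma3p5 (K : fieldType) (n : nat) (e : rel 'I_n) :
  (0 < n)%N -> simple_graph e -> connected_graph e ->
  (forall t : nat, (1 <= t)%N ->
     is_assoc (ideal_pow (cover_ideal (K := K) (liftG e)) t)
              (var_ideal (@oldV n)) ->
     is_assoc (ideal_pow (cover_ideal (K := K) (cone e)) t.+1)
              (var_ideal predT)) /\
  (forall t : nat, (2 <= t)%N ->
     is_assoc (ideal_pow (edge_ideal (K := K) (liftG e)) t)
              (var_ideal (@oldV n)) ->
     is_assoc (ideal_pow (edge_ideal (K := K) (cone e)) t)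
              (var_ideal predT)).
Proof.
move=> n_gt0 e_simple _; have v_old := vG_neq_max (Ordinal n_gt0).
split=> t _.
- move/(assoc_var_ideal_witness (ideal_pow_monomial t (cover_ideal_monomial _))).
  case=> m [Mm Mim].
  have [Mdm Midm] := exps_pow_witness_drop_max (covers_drop_max e_simple) Mm Mim.
  apply: (witness_assoc_var_idealT (m := cone_cover_witness t (drop_max m)) _
           (ideal_pow_monomial _ (cover_ideal_monomial _))).
  + exact: exps_pow_upward_closed.
  + exact: (cone_cover_witness_notin e_simple (drop_max_max m) Mdm).
  + exact: cone_cover_witness_mulX v_old Midm.
- move/(assoc_var_ideal_witness (ideal_pow_monomial t (edge_ideal_monomial _))).
  case=> m [Mm Mim].
  have [Mdm Midm] := exps_pow_witness_drop_max (has_edge_drop_max e_simple) Mm Mim.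
  apply: (witness_assoc_var_idealT (m := drop_max m) _
           (ideal_pow_monomial _ (edge_ideal_monomial _))).
  + exact: exps_pow_upward_closed.
  + exact: (cone_edge_witness_notin (drop_max_max m) Mdm).
  + exact: (cone_edge_witness_mulX e_simple v_old Mdm Midm).
Qed.
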